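(* Let $(X,\|\cdot\|)$ be a Banach space, $A,B\subset X$ nonempty, and suppose $A$ is a uniformly convex set. Then the ordered pair $(A,B)$ has the $UC$ property.
   Context: The metric is $\rho(x,y)=\|x-y\|$; $\mathrm{dist}(A,B)=\inf\{\|a-b\|:a\in A,b\in B\}$; $B(x_0,r)=\{x\in X:\|x-x_0\|<r\}$. A set $A\subset X$ is a uniformly convex set if for every $\varepsilon>0$ there exists $\eta(\varepsilon)>0$ such that for all $x,y\in A$ with $\|x-y\|\ge\varepsilon$ one has $B\left(\frac{x+y}{2},\eta(\varepsilon)\right)\subset A$. The ordered pair $(A,B)$ has the $UC$ property if for all sequences $\{x_n\},\{z_n\}\subset A$, $\{y_n\}\subset B$ with $\lim_n\|x_n-y_n\|=\lim_n\|z_n-y_n\|=\mathrm{dist}(A,B)$ one has $\lim_n\|x_n-z_n\|=0$. *)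

From HB Require Import structures.
From mathcomp Require Import all_boot all_order all_algebra.
From mathcomp Require Import all_classical all_reals all_analysis.
Set Implicit Arguments. Unset Strict Implicit. Unset Printing Implicit Defensive.
Import Order.TTheory GRing.Theory Num.Theory.
Import numFieldNormedType.Exports.
Local Open Scope classical_set_scope.
Local Open Scope ring_scope.

Definition setdist {R : realType} {X : normedModType R} (A B : set X) : R :=
  inf [set `|a - b| | a in A & b in B].

Definition nball {R : realType} {X : normedModType R} (x0 : X) (r : R) : set X :=
  [set x | `|x - x0| < r].

Definition unif_convex_set {R : realType} {X : normedModType R} (A : set X) : Prop :=
  forall eps : R, 0 < eps -> exists eta : R, 0 < eta /\
    forall x y, A x -> A y -> eps <= `|x - y| ->
      nball ((2%:R)^-1 *: (x + y)) eta `<=` A.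

Definition UC_property {R : realType} {X : normedModType R} (A B : set X) : Prop :=
  forall (x z : nat -> X) (y : nat -> X),
    (forall n, A (x n)) -> (forall n, A (z n)) -> (forall n, B (y n)) ->
    (fun n => `|x n - y n|) @ \oo --> setdist A B ->
    (fun n => `|z n - y n|) @ \oo --> setdist A B ->
    (fun n => `|x n - z n|) @ \oo --> (0 : R).

From HB Require Import structures.
From mathcomp Require Import all_boot all_order all_algebra.
From mathcomp Require Import all_classical all_reals all_analysis.
From mathcomp Require Import lra.
Import Order.TTheory GRing.Theory Num.Theory.
Import numFieldNormedType.Exports.
Local Open Scope classical_set_scope.
Local Open Scope ring_scope.

(* Write d = dist(A,B).  The geometric core is [setdist_le_ball]: if an open
   ball B(m, r) lies in A and y is a point of B, then d <= max(0, |m-y| - r/2),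
   because either y itself lies in A, or the point of the segment [m, y] at
   distance r/2 from m does.  Applying this to the midpoint m of x, z in A
   with |x - z| >= eps (so that B(m, eta(eps)) lies in A), and bounding
   |m - y| by the mean of |x - y| and |z - y| ([norm_midpoint_sub]), shows
   that |x - y| and |z - y| cannot both be close to d while x and z stay
   eps apart.  The main theorem turns this into the required limit using
   that both distance sequences eventually lie below d + c for a small c. *)

Section SetDistance.
Context {R : realType} {X : normedModType R}.
Implicit Types (A B : set X) (a b m y : X).

Lemma setdist_le A B a b : A a -> B b -> setdist A B <= `|a - b|.
Proof.
move=> Aa Bb; apply: ge_inf; last by exists a => //; exists b.
by exists 0 => _ [a' _ [b' _ <-]].
Qed.

Lemma setdist_ge0 A B : A !=set0 -> B !=set0 -> 0 <= setdist A B.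
Proof.
move=> [a Aa] [b Bb]; apply: lb_le_inf; first by exists `|a - b|, a => //; exists b.
by move=> _ [a' _ [b' _ <-]].
Qed.

Arguments setdist_le {A B a b}.
Arguments setdist_ge0 {A B}.

(* If the ball B(m, r) lies in A, then from any y in B one reaches A within
   max(0, |m - y| - r/2): take y itself, or the point of [m, y] at distance
   r/2 from m. *)
Lemma setdist_le_ball {A B m y r} : 0 < r -> nball m r `<=` A -> B y ->
  setdist A B <= Num.max 0 (`|m - y| - r / 2).
Proof.
move=> r0 ballA By; rewrite le_max.
have [ymr|rmy] := ltP `|m - y| r.
  have Ay : A y by apply: ballA; rewrite /nball /= -normrN opprB.
  by have := setdist_le Ay By; rewrite subrr normr0 => ->.
have my0 : 0 < `|m - y| by exact: lt_le_trans r0 rmy.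
set k := (r / 2) / `|m - y|.
have k0 : 0 <= k by rewrite divr_ge0 // ltW // divr_gt0.
have k1 : 1 - k >= 0 by rewrite subr_ge0 /k ler_pdivrMr // mul1r; lra.
set w := m + k *: (y - m).
have Aw : A w.
  apply: ballA; rewrite /nball /= /w addrAC subrr add0r normrZ -normrN opprB.
  by rewrite ger0_norm // mulfVK ?gt_eqF //; lra.
have wy : w - y = (1 - k) *: (m - y).
  by rewrite /w scalerBl scale1r -scalerN opprB addrAC.
have := setdist_le Aw By; rewrite wy normrZ ger0_norm // mulrBl mul1r.
by rewrite /k mulfVK ?gt_eqF // => ->; rewrite orbT.
Qed.

Lemma norm_midpoint_sub (x z y : X) :
  `|2%:R^-1 *: (x + z) - y| <= (`|x - y| + `|z - y|) / 2.
Proof.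
have -> : 2%:R^-1 *: (x + z) - y = 2%:R^-1 *: ((x - y) + (z - y)).
  rewrite [in RHS]scalerDr !scalerBr [in RHS]addrACA -opprD -scalerDl scalerDr.
  have -> : (2%:R^-1 + 2%:R^-1 : R) = 1 by rewrite [RHS](splitr 1) mul1r.
  by rewrite scale1r.
rewrite normrZ ger0_norm ?invr_ge0 // mulrC ler_pM2r ?invr_gt0 //.
exact: ler_normD.
Qed.

Lemma norm_sub_le_via (x z y : X) : `|x - z| <= `|x - y| + `|z - y|.
Proof.
have -> : x - z = (x - y) - (z - y) by rewrite opprB addrA subrK.
exact: ler_normB.
Qed.

End SetDistance.

Theorem theorem37 (R : realType) (X : completeNormedModType R) (A B : set X) :
  A !=set0 -> B !=set0 -> unif_convex_set A -> UC_property A B.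
Proof.
move=> A0 B0 ucA x z y Ax Az By cx cz.
apply/cvgr0Pnorm_lt => eps eps0.
have [eta [eta0 ballA]] := ucA eps eps0.
set d := setdist A B.
have d0 : 0 <= d by exact: setdist_ge0.
(* c is small enough for both contradictions below. *)
set c := Num.min (eta / 2) (eps / 2).
have c0 : 0 < c by rewrite lt_min; apply/andP; split; lra.
have c_eta : c <= eta / 2 by rewrite ge_min lexx.
have c_eps : c <= eps / 2 by rewrite ge_min lexx orbT.
have dc : d < d + c by lra.
clearbody c.
near=> n.
have xy : `|x n - y n| < d + c by near: n; exact: cvgr_lt cx _ dc.
have zy : `|z n - y n| < d + c by near: n; exact: cvgr_lt cz _ dc.
rewrite normr_id ltNge; apply/negP => far.
have := setdist_le_ball eta0 (ballA _ _ (Ax n) (Az n) far) (By n).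
rewrite -/d le_max => /orP[d_le0|d_le].
- (* d = 0, so x n and z n are both within c <= eps/2 of y n *)
  have := norm_sub_le_via (x n) (z n) (y n); lra.
- (* the midpoint is within d + c of y n, leaving no room for eta/2 *)
  have := norm_midpoint_sub (x n) (z n) (y n); lra.
Unshelve. all: by end_near.
Qed.
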